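(* Let $\lambda=(\lambda_i)\in\{0,\dots,l-1\}^n$ and $v\in V^0_\varepsilon(\lambda)$. (a) $E_iv=0$ for all $i\in I$ if and only if $v\in\mathbb Cv(0)$. (b) $F_iv=0$ for all $i\in I$ if and only if $v\in\mathbb Cv(m^\lambda)$, where $m^\lambda=(m^\lambda_{ij})_{1\le i\le j\le n}\in\{0,\dots,l-1\}^N$ is defined by $m^\lambda_{ij}\equiv\sum_{k=1}^i\lambda_{j-k+1}\pmod l$.
   Context: $n\ge1$, $I=\{1,\dots,n\}$, $N=n(n+1)/2$; $l>2$ odd, $\gcd(l,n+1)=1$, $\varepsilon$ a primitive $l$-th root of unity; $[c]_\varepsilon=(\varepsilon^c-\varepsilon^{-c})/(\varepsilon-\varepsilon^{-1})$ for $c\in\mathbb Z$. $U_\varepsilon$: the $\mathbb C$-algebra generated by $E_i,F_i,K_\mu$ ($i\in I$, $\mu$ in the root lattice of $\mathfrak{sl}_{n+1}$) with the relations of $U_q(\mathfrak{sl}_{n+1})$ at $q=\varepsilon$. $V^0_\varepsilon(\lambda)$: vector space with basis $v(m)$, $m=(m_{ij})_{1\le i\le j\le n}\in\{0,\dots,l-1\}^N$, with $v(m+lm')=v(m)$ ($m'\in\mathbb Z^N$); $\epsilon_{ij}$ unit vectors; $\alpha_{i,j}=\sum_{k=j+1}^i\epsilon_{k-1,n-i+k}-\sum_{k=j}^i\epsilon_{k,n-i+k}$ ($j\le i$); for $c\in\mathbb Z^N$ ($c_{ij}=0$ outside range) $M_{i,j}(c)=\sum_{k=i-1}^{j-1}(c_{i,k}-c_{i-1,k})+\sum_{k=i}^j(c_{i,k}-c_{i+1,k})$,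 $N_{i,j}(c)=c_{j-1,n-i+j}-c_{j,n-i+j}$, $\mu_i(c)=\sum_{k=i-1}^nc_{i-1,k}-2\sum_{k=i}^nc_{i,k}+\sum_{k=i+1}^nc_{i+1,k}$. It is the $U_\varepsilon$-module (Schnizer module with all $a_{ij}=1$, $b_{ij}=0$) with $E_iv(m)=\sum_{j=1}^i[N_{i,j}(m)]_\varepsilon v(m+\alpha_{i,j})$, $F_iv(m)=\sum_{j=i}^n[M_{i,j}(m)-\lambda_i]_\varepsilon v(m+\epsilon_{i,j})$, $K_{\alpha_i}v(m)=\varepsilon^{\mu_i(m)+\lambda_i}v(m)$. *)

From HB Require Import structures.
From mathcomp Require Import all_boot all_order all_algebra.
From mathcomp Require Import algC.
Set Implicit Arguments. Unset Strict Implicit. Unset Printing Implicit Defensive.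
Import Order.TTheory GRing.Theory Num.Theory.
Local Open Scope ring_scope.

(* Index pairs (i,j) with 1 <= i <= j <= n, stored 0-based as (i-1, j-1). *)
Notation Pn n := {p : 'I_n * 'I_n | (p.1 <= p.2)%N}.

(* Basis labels m in {0,...,l-1}^N, i.e. (Z/lZ)^N  (l > 2 assumed where used). *)
Notation Blab n l := {ffun Pn n -> 'Z_l}.

(* The vector space V^0_eps(lambda): coordinates w.r.t. the basis v(m). *)
Notation Vsp n l := {ffun Blab n l -> algC^o}.

Definition bvec n l (m : Blab n l) : Vsp n l := [ffun m' => (m' == m)%:R].

(* entries m_{ij} (1-based) as integers in {0..l-1}; 0 outside 1<=i<=j<=n *)
Definition mval n l (m : Blab n l) (i j : nat) : int :=
  \sum_(p : Pn n | ((val p).1.+1 == i) && ((val p).2.+1 == j)) (val (m p))%:Z.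

(* m + d (reduced mod l), for d : Z^N given as a 1-based function *)
Definition mshift n l (m : Blab n l) (d : nat -> nat -> int) : Blab n l :=
  [ffun p => m p + (d (val p).1.+1 (val p).2.+1)%:~R].

Definition unitv (a b : nat) : nat -> nat -> int :=
  fun i j => ((i == a) && (j == b))%:R.

Definition alpha (n i j : nat) : nat -> nat -> int := fun a b =>
  \sum_(j.+1 <= k < i.+1) unitv (predn k) (n - i + k)%N a b
  - \sum_(j <= k < i.+1) unitv k (n - i + k)%N a b.

Definition Mij (n : nat) (c : nat -> nat -> int) (i j : nat) : int :=
  \sum_(predn i <= k < j) (c i k - c (predn i) k) + \sum_(i <= k < j.+1) (c i k - c i.+1 k).

Definition Nij (n : nat) (c : nat -> nat -> int) (i j : nat) : int :=
  c (predn j) (n - i + j)%N - c j (n - i + j)%N.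

Definition qint (eps : algC) (c : int) : algC :=
  (eps ^ c - eps ^ (- c)) / (eps - eps^-1).

(* E_i and F_i on V^0_eps(lambda) (lambda given 1-based) *)
Definition Eop n l (eps : algC) (i : nat) (v : Vsp n l) : Vsp n l :=
  \sum_(m : Blab n l) v m *:
     \sum_(1 <= j < i.+1) qint eps (Nij n (mval m) i j) *: bvec (mshift m (alpha n i j)).

Definition Fop n l (eps : algC) (lam : nat -> nat) (i : nat) (v : Vsp n l) : Vsp n l :=
  \sum_(m : Blab n l) v m *:
     \sum_(i <= j < n.+1)
        qint eps (Mij n (mval m) i j - (lam i)%:Z) *: bvec (mshift m (unitv i j)).

Definition mlam n l (lam : nat -> nat) : Blab n l :=
  [ffun p : Pn n => (((\sum_(1 <= k < ((val p).1.+1).+1) lam ((val p).2.+1 - k).+1)%N)%:R : 'Z_l)].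

(* Since l is odd, [c]_eps vanishes exactly when l divides c, so each coefficient
   of E_i v(m) or F_i v(m) vanishes iff a linear expression in the entries of m is
   0 in Z/l. If v is killed by all E_i (resp. F_i), these expressions vanish for
   every m in the support of v, provided the shifted labels m + alpha_{i,j}
   (resp. m + eps_{i,j}) coming from distinct pairs (m, j) are distinct, so that
   nothing cancels. Distinctness and the vanishing are obtained together by
   induction: for E_i by increasing i, the entries of m on the diagonals
   b - a > n - i being already known to vanish; for F_i by decreasing i, the
   equations M_{i',k}(m) = lambda_{i'} being already known for i' > i. The
   resulting triangular systems force m = 0, resp. m = m^lambda, whose entries are
   differences of partial sums of lambda. *)

From HB Require Import structures.
From mathcomp Require Import all_boot all_order all_algebra.
From mathcomp Require Import algC.
From mathcomp Require Import zify.
Import Order.TTheory GRing.Theory Num.Theory.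
Set Implicit Arguments. Unset Strict Implicit. Unset Printing Implicit Defensive.
Local Open Scope ring_scope.

Lemma Zp_int_eq0 (l : nat) (c : int) : (1 < l)%N -> ((c%:~R : 'Z_l) == 0) = (l %| `|c|)%N.
Proof.
move=> l_gt1; have Zp_nat_eq0 k : ((k%:R : 'Z_l) == 0) = (l %| k)%N.
  by rewrite -val_eqE /= val_Zp_nat.
by case: c => k; rewrite ?NegzE ?mulrNz ?oppr_eq0 Zp_nat_eq0.
Qed.

Section QuantumIntegerAtRootOfUnity.

Variables (l : nat) (eps : algC).
Hypotheses (l_gt2 : (2 < l)%N) (l_odd : odd l) (eps_prim : l.-primitive_root eps).

Let eps_unit : eps \is a GRing.unit.
Proof.
rewrite unitfE; apply: contra_eq_neq (prim_expr_order eps_prim) => ->.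
by rewrite expr0n gtn_eqF ?(ltn_trans _ l_gt2) // eq_sym oner_eq0.
Qed.

Let eps_neq_inv : eps - eps^-1 != 0.
Proof.
rewrite subr_eq0 -(inj_eq (mulrI eps_unit)) divrr // -expr2.
by rewrite -(prim_order_dvd eps_prim) gtnNdvd.
Qed.

Lemma qint_eq0 (c : int) : (qint eps c == 0) = ((c%:~R : 'Z_l) == 0).
Proof.
have epsc_unit : eps ^ c \is a GRing.unit by exact: unitrXz.
rewrite /qint mulf_eq0 invr_eq0 (negbTE eps_neq_inv) orbF subr_eq0 -invr_expz.
rewrite -(inj_eq (mulrI epsc_unit)) divrr // -expr2.
have -> : ((eps ^ c) ^+ 2 == 1) = (eps ^+ (`|c| * 2) == 1).
  by case: c {epsc_unit} => k; rewrite /= ?exprVn ?invr_eq1 exprM.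
rewrite -(prim_order_dvd eps_prim) Gauss_dvdl ?coprimen2 // Zp_int_eq0 //.
exact: ltn_trans l_gt2.
Qed.

End QuantumIntegerAtRootOfUnity.

Lemma sum_nat_indicator (R : pzSemiRingType) (lo hi x : nat) :
  \sum_(lo <= k < hi) ((k == x)%:R : R) = (lo <= x < hi)%N%:R.
Proof.
rewrite -natr_sum -mem_index_iota -count_uniq_mem ?iota_uniq //.
by rewrite -sum1_count [in RHS]big_mkcond.
Qed.

Section BasisExpansion.

Variables n l : nat.
Implicit Types (v : Vsp n l) (m : Blab n l).

Lemma scale_bvecE (c : algC) m0 m : (c *: bvec m0) m = if m == m0 then c else 0.
Proof. by rewrite !ffunE; case: eqP => _; [exact: mulr1 | exact: mulr0]. Qed.

Lemma sum_scale_bvec (g : Blab n l -> Vsp n l) (c : algC) m0 :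
  \sum_m (c *: bvec m0) m *: g m = c *: g m0.
Proof.
rewrite (bigD1 m0) //= big1 => [|m /negbTE mm0]; rewrite scale_bvecE ?eqxx ?mm0 ?scale0r //.
by rewrite addr0.
Qed.

Lemma scale_bvecP v m0 : (exists c, v = c *: bvec m0) <-> (forall m, v m != 0 -> m = m0).
Proof.
split=> [[c ->] m | supp_v]; first by rewrite scale_bvecE; case: (m =P m0); rewrite ?eqxx.
exists (v m0); apply/ffunP => m; rewrite scale_bvecE.
have [-> // | mm0] := eqVneq m m0.
by apply/eqP; apply: contraNT mm0 => /supp_v ->.
Qed.

Lemma sum_bvec_coef_eq0 (I : eqType) (J : seq I) v (f : Blab n l -> I -> Blab n l)
    (c : Blab n l -> I -> algC) :
  uniq J ->
  (forall m1 m2 j1 j2, v m1 != 0 -> v m2 != 0 -> j1 \in J -> j2 \in J ->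
     f m1 j1 = f m2 j2 -> m1 = m2 /\ j1 = j2) ->
  \sum_m v m *: \sum_(j <- J) c m j *: bvec (f m j) = 0 ->
  forall m j, v m != 0 -> j \in J -> c m j = 0.
Proof.
move=> uJ f_inj sum0 m j vm jJ.
have /eqP := congr1 (fun w : Vsp n l => w (f m j)) sum0.
rewrite ffunE sum_ffunE (bigD1 m) //= [X in _ + X]big1 => [|m' m'm]; last first.
  have [-> | vm'] := eqVneq (v m') 0; first by rewrite scale0r ffunE.
  rewrite ffunE sum_ffunE big1_seq ?scaler0 // => j' /= j'J.
  rewrite !ffunE; case: eqP => [e | _]; last by rewrite scaler0.
  by have [mm' _] := f_inj _ _ _ _ vm vm' jJ j'J e; rewrite mm' eqxx in m'm.
rewrite addr0 ffunE sum_ffunE (bigD1_seq j) //= [X in _ + X]big1_seq; last first.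
  move=> j' /andP[j'j j'J].
  rewrite !ffunE; case: eqP => [e | _]; last by rewrite scaler0.
  by have [_ jj'] := f_inj _ _ _ _ vm vm jJ j'J e; rewrite jj' eqxx in j'j.
rewrite !ffunE eqxx addr0 !scaler_eq0 (negbTE vm) oner_eq0 orbF /=.
by move/eqP.
Qed.

Lemma mshift_inj (d : nat -> nat -> int) m1 m2 : mshift m1 d = mshift m2 d -> m1 = m2.
Proof.
move=> /ffunP e; apply/ffunP => p.
by have := e p; rewrite !ffunE; apply: addIr.
Qed.

Lemma sum_mshift_coef_eq0 (J : seq nat) v (d : nat -> nat -> nat -> int)
    (c : Blab n l -> nat -> algC) :
  uniq J ->
  (forall m1 m2 j1 j2, v m1 != 0 -> v m2 != 0 -> j1 \in J -> j2 \in J ->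
     (j1 < j2)%N -> mshift m1 (d j1) != mshift m2 (d j2)) ->
  \sum_m v m *: \sum_(j <- J) c m j *: bvec (mshift m (d j)) = 0 ->
  forall m j, v m != 0 -> j \in J -> c m j = 0.
Proof.
move=> uJ no_coll; apply: sum_bvec_coef_eq0 => // m1 m2 j1 j2 v1 v2 j1J j2J e.
have [j12 | j21 | j12] := ltngtP j1 j2.
- by have := no_coll _ _ _ _ v1 v2 j1J j2J j12; rewrite e eqxx.
- by have := no_coll _ _ _ _ v2 v1 j2J j1J j21; rewrite e eqxx.
- by subst j2; split=> //; apply: mshift_inj e.
Qed.

End BasisExpansion.

Definition in_triangle (n a b : nat) := [&& 0 < a, a <= b & b <= n]%N.

Lemma in_triangle_gt n a b : (b < a)%N -> in_triangle n a b = false.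
Proof. by move=> ba; rewrite /in_triangle (leqNgt a b) ba andbF. Qed.

Section LabelEntries.

Variables n l : nat.
Implicit Types m : Blab n l.

Definition entry m (a b : nat) : 'Z_l := (mval m a b)%:~R.

Lemma in_triangle_val (p : Pn n) : in_triangle n (val p).1.+1 (val p).2.+1.
Proof. by case: p => -[a b] /= ab; rewrite /in_triangle !ltnS ab ltn_ord. Qed.

Lemma in_triangleP a b :
  in_triangle n a b -> exists p : Pn n, (val p).1.+1 = a /\ (val p).2.+1 = b.
Proof.
case/and3P=> a_gt0 ab bn.
have a'n : (a.-1 < n)%N by lia.
have b'n : (b.-1 < n)%N by lia.
have ab' : ((Ordinal a'n, Ordinal b'n).1 <= (Ordinal b'n, Ordinal b'n).2)%N by rewrite /=; lia.
by exists (exist _ (Ordinal a'n, Ordinal b'n) ab') => /=; lia.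
Qed.

Lemma entry_val m (p : Pn n) : entry m (val p).1.+1 (val p).2.+1 = m p.
Proof.
rewrite /entry /mval (big_pred1 p) => [|q /=]; first by rewrite -pmulrn natr_Zp.
by rewrite !eqSS -xpair_eqE -val_eqE.
Qed.

Lemma entry_out m a b : ~~ in_triangle n a b -> entry m a b = 0.
Proof.
move=> ab_out; rewrite /entry /mval big_pred0 // => p.
by apply: contraNF ab_out => /andP[/eqP <- /eqP <-]; apply: in_triangle_val.
Qed.

Lemma entry0 a b : entry 0 a b = 0.
Proof. by rewrite /entry /mval big1 // => p _; rewrite ffunE. Qed.

Lemma entry_mshift m d a b :
  in_triangle n a b -> entry (mshift m d) a b = entry m a b + (d a b)%:~R.
Proof. by case/in_triangleP=> p [<- <-]; rewrite !entry_val ffunE. Qed.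

Lemma entry_inj m1 m2 :
  (forall a b, in_triangle n a b -> entry m1 a b = entry m2 a b) -> m1 = m2.
Proof. by move=> e; apply/ffunP => p; rewrite -!entry_val e ?in_triangle_val. Qed.

End LabelEntries.

Lemma alphaE n i j a b :
  alpha n i j a b = ((j <= a < i)%N && (b == a.+1 + (n - i))%N)%:R
                    - ((j <= a <= i)%N && (b == a + (n - i))%N)%:R.
Proof.
have sum_row lo hi x q :
    \sum_(lo <= k < hi) (((k == x) && q)%:R : int) = ((lo <= x < hi)%N && q)%:R.
  case: q; last by rewrite andbF big1 // => k _; rewrite andbF.
  by rewrite andbT -sum_nat_indicator; apply: eq_bigr => k _; rewrite andbT.
rewrite /alpha /unitv.
rewrite (eq_big_nat _ _ (F2 := fun k => ((k == a.+1) && (b == a.+1 + (n - i))%N)%:R)).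
  rewrite [X in _ - X](eq_bigr (fun k => ((k == a) && (b == a + (n - i))%N)%:R)).
    by rewrite !sum_row.
  by move=> k _; rewrite eq_sym; case: eqP => // ->; rewrite addnC.
case=> [/andP[] // | k _]; rewrite /= eqSS [a == _]eq_sym.
by case: eqP => // ->; rewrite addnC.
Qed.

Lemma subrBB (R : zmodType) (x y z : R) : x - y - (x - z) = z - y.
Proof. by rewrite opprB addrC subrKA. Qed.

Lemma subrACA (R : zmodType) (x y z w : R) : x - y - (z - w) = x - z - (y - w).
Proof. by rewrite !opprB addrACA [in RHS]addrACA (addrC (- y)). Qed.

Section MSum.

Variable R : zmodType.
Implicit Types c : nat -> nat -> R.

(* The paper's M_{i,j}(c), over any Z-module; [Mij n] is its instance at [int]. *)
Definition Msum c (i j : nat) : R :=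
  \sum_(i.-1 <= k < j) (c i k - c i.-1 k) + \sum_(i <= k < j.+1) (c i k - c i.+1 k).

Lemma eq_Msum c1 c2 : c1 =2 c2 -> Msum c1 =2 Msum c2.
Proof.
by move=> e i j; rewrite /Msum; congr (_ + _); apply: eq_bigr => k _; rewrite !e.
Qed.

Lemma MsumB c1 c2 i j :
  Msum (fun a b => c1 a b - c2 a b) i j = Msum c1 i j - Msum c2 i j.
Proof.
rewrite /Msum opprD addrACA -!sumrB.
by congr (_ + _); apply: eq_bigr => k _; rewrite subrACA.
Qed.

Lemma Msum_diag c i : (0 < i)%N ->
  Msum c i i = (c i i.-1 - c i.-1 i.-1) + (c i i - c i.+1 i).
Proof. by case: i => // i _; rewrite /Msum /= !big_nat1. Qed.

Lemma Msum_succ c i j : (i <= j.+1)%N ->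
  Msum c i j.+1 = Msum c i j + (c i j - c i.-1 j) + (c i j.+1 - c i.+1 j.+1).
Proof.
move=> ij; rewrite /Msum big_nat_recr /=; last by lia.
by rewrite [in LHS]big_nat_recr //= addrACA addrA.
Qed.

Lemma Msum_row_below c i k : c i.+1 =1 (fun=> 0) -> c i.+2 =1 (fun=> 0) ->
  Msum c i.+1 k = - \sum_(i <= k' < k) c i k'.
Proof.
move=> row1 row2; rewrite /Msum /= [X in _ + X]big1 => [|k' _]; last by rewrite row1 row2 subr0.
by rewrite addr0 sumrB big1 ?sub0r // => k' _; rewrite row1.
Qed.

Lemma Msum_partial_sums n (P : nat -> R) c :
  (forall a b, (a <= b <= n)%N -> c a b = P b - P (b - a)%N) ->
  (forall a b, (b < a)%N -> c a b = 0) ->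
  forall i j, in_triangle n i j -> Msum c i j = P i - P i.-1.
Proof.
move=> cP c0 i j /and3P[i_gt0 + jn].
elim: j jn => [|j IHj] jn; first by rewrite leqn0 => /eqP i0; rewrite i0 in i_gt0.
rewrite leq_eqVlt ltnS => /predU1P[-> {IHj} | ij].
  rewrite Msum_diag // (c0 j.+1 j) ?(c0 j.+2 j.+1) // !cP ?subnn /=;
    rewrite ?leqnn ?jn ?(ltnW jn) //.
  by rewrite sub0r subr0 opprB addrC subrKA.
have i'j : (i.-1 <= j)%N by rewrite (leq_trans (leq_pred i)).
rewrite (Msum_succ _ (leqW ij)) (IHj (ltnW jn) ij) !cP;
  rewrite ?ltnS ?i'j ?ij ?(leqW ij) ?jn ?(ltnW jn) //.
by rewrite -[(j - i.-1)%N]subSS prednK // subSS !subrBB -addrA subrKA subrr addr0.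
Qed.

Lemma Msum_eq0_triangle n c :
  (forall a b, ~~ in_triangle n a b -> c a b = 0) ->
  (forall i j, in_triangle n i j -> Msum c i j = 0) ->
  forall a b, c a b = 0.
Proof.
move=> c_out M0.
have c_lower a b : (b < a)%N -> c a b = 0 by move=> ba; rewrite c_out ?in_triangle_gt.
have diag0 s r : c r (r + s)%N = 0.
  elim: s r => [|s IHs] r; elim: r => [|r IHr]; try by rewrite c_out.
    rewrite addn0; rewrite addn0 in IHr.
    have [ar | /c_out //] := boolP (in_triangle n r.+1 r.+1).
    have := M0 _ _ ar; rewrite Msum_diag //= IHr (c_lower r.+1 r) // (c_lower r.+2 r.+1) //.
    by rewrite subrr add0r subr0.
  have [ar | /c_out //] := boolP (in_triangle n r.+1 (r.+1 + s.+1)%N).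
  have ar' : in_triangle n r.+1 (r.+1 + s)%N.
    by move: ar; rewrite /in_triangle !leq_addr addnS /= => /ltnW.
  have cr0 : c r (r.+1 + s)%N = 0 by rewrite addSnnS IHr.
  have cr2 : c r.+2 (r.+1 + s)%N.+1 = 0 by rewrite -addSn IHs.
  have := M0 _ _ ar; rewrite addnS (Msum_succ _ (leqW (leq_addr s r.+1))).
  by rewrite (M0 _ _ ar') IHs cr0 cr2 !subr0 !add0r.
move=> a b; have [ab | ba] := leqP a b; last exact: c_lower.
by rewrite -(subnKC ab) diag0.
Qed.

End MSum.

Lemma raddf_Msum (R S : zmodType) (f : {additive R -> S}) (c : nat -> nat -> R) i j :
  f (Msum c i j) = Msum (fun a b => f (c a b)) i j.
Proof.
by rewrite raddfD !raddf_sum; congr (_ + _); apply: eq_bigr => k _; rewrite raddfB.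
Qed.

Section RaisingOperators.

Variables (n l : nat) (eps : algC).
Hypotheses (l_gt2 : (2 < l)%N) (l_odd : odd l) (eps_prim : l.-primitive_root eps).
Implicit Types (v : Vsp n l) (m : Blab n l).

Lemma qint_Nij_eq0 m i j :
  (qint eps (Nij n (mval m) i j) == 0) =
  (entry m j.-1 (n - i + j) == entry m j (n - i + j)).
Proof. by rewrite (qint_eq0 l_gt2 l_odd eps_prim) /Nij intrB subr_eq0. Qed.

Definition vanish_from_diag m d :=
  forall a b, in_triangle n a b -> (d <= b - a)%N -> entry m a b = 0.

Lemma mshift_alpha_neq m1 m2 i j1 j2 :
  vanish_from_diag m1 (n - i).+1 -> vanish_from_diag m2 (n - i).+1 ->
  (0 < j1)%N -> (j1 < j2)%N -> (j2 <= i <= n)%N ->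
  mshift m1 (alpha n i j1) != mshift m2 (alpha n i j2).
Proof.
move=> van1 van2 j1_gt0 j12 /andP[j2i i_le_n]; apply/eqP => e.
(* At (j1, j1 + 1 + n - i), on the diagonal n - i + 1, both labels vanish, while
   alpha_{i,j1} is 1 there and alpha_{i,j2} is 0. *)
have jb : in_triangle n j1 (j1.+1 + (n - i))%N by rewrite /in_triangle; lia.
have diag : ((n - i).+1 <= j1.+1 + (n - i) - j1)%N by lia.
have j1i : (j1 < i)%N by apply: leq_trans j2i.
have := congr1 (fun m => entry m j1 (j1.+1 + (n - i))%N) e.
rewrite /= !entry_mshift // van1 // van2 // !alphaE eqxx leqnn j1i (leqNgt j2 j1) j12.
rewrite eqn_add2r (gtn_eqF (ltnSn j1)) andbF subr0 oppr0 /= => /eqP.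
by rewrite !add0r mulr0z mulr1z oner_eq0.
Qed.

Lemma Eop_kernel_vanish_step v i : (0 < i <= n)%N -> Eop eps i v = 0 ->
  (forall m, v m != 0 -> vanish_from_diag m (n - i).+1) ->
  forall m, v m != 0 -> vanish_from_diag m (n - i).
Proof.
move=> /andP[i_gt0 i_le_n] Ev0 van m vm a b ab.
rewrite leq_eqVlt => /predU1P[diag | ]; last exact: van.
have no_coll m1 m2 j1 j2 : v m1 != 0 -> v m2 != 0 ->
    j1 \in index_iota 1 i.+1 -> j2 \in index_iota 1 i.+1 -> (j1 < j2)%N ->
    mshift m1 (alpha n i j1) != mshift m2 (alpha n i j2).
  rewrite !mem_index_iota => v1 v2 /andP[j1_gt0 _] /andP[_ j2i] j12.
  by apply: mshift_alpha_neq; [apply: van | apply: van | | | apply/andP].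
have coef0 := sum_mshift_coef_eq0 (iota_uniq _ _) no_coll Ev0.
have a_mem : a \in index_iota 1 i.+1.
  by rewrite mem_index_iota; move: ab; rewrite /in_triangle; lia.
have eb : b = (n - i + a)%N by move: ab diag; rewrite /in_triangle; lia.
have /eqP := coef0 m a vm a_mem; rewrite qint_Nij_eq0 -eb => /eqP <-.
have [a'b | /entry_out //] := boolP (in_triangle n a.-1 b).
by apply: (van m vm _ _ a'b); move: ab; rewrite /in_triangle; lia.
Qed.

Lemma Eop_kernel_support v :
  (forall i, (0 < i <= n)%N -> Eop eps i v = 0) -> forall m, v m != 0 -> m = 0.
Proof.
move=> Ev0.
have van i : (i <= n)%N -> forall m, v m != 0 -> vanish_from_diag m (n - i).
  elim: i => [_ m _ a b /and3P[a_gt0 ab bn] | i IHi i_lt_n].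
    by rewrite subn0 => nba; exfalso; lia.
  apply: Eop_kernel_vanish_step; [by rewrite i_lt_n | exact: Ev0 | ].
  by rewrite subnSK //; apply: IHi (ltnW i_lt_n).
move=> m vm; apply: entry_inj => a b ab; rewrite entry0.
by apply: (van n (leqnn n) m vm _ _ ab); rewrite subnn.
Qed.

End RaisingOperators.

Definition prefix_sum (lam : nat -> nat) (t : nat) : nat := \sum_(1 <= s < t.+1) lam s.

Lemma prefix_sumS (lam : nat -> nat) t :
  prefix_sum lam t.+1 = (prefix_sum lam t + lam t.+1)%N.
Proof. by rewrite /prefix_sum big_nat_recr. Qed.

Lemma prefix_sum_window (lam : nat -> nat) a b : (a <= b)%N ->
  (\sum_(1 <= k < a.+1) lam (b - k).+1 + prefix_sum lam (b - a) = prefix_sum lam b)%N.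
Proof.
elim: a => [|a IHa] ab; first by rewrite big_geq // subn0.
rewrite -(IHa (ltnW ab)) -(subnSK ab) prefix_sumS big_nat_recr //=; lia.
Qed.

Lemma entry_mlam n l lam a b : (a <= b <= n)%N ->
  entry (mlam n l lam) a b = (prefix_sum lam b)%:R - (prefix_sum lam (b - a))%:R.
Proof.
case: a => [|a] /andP[ab bn]; first by rewrite entry_out ?subn0 ?subrr.
have [p [pa pb]] : exists p : Pn n, (val p).1.+1 = a.+1 /\ (val p).2.+1 = b.
  by apply: in_triangleP; rewrite /in_triangle ab bn.
by rewrite -pa -pb entry_val ffunE pa pb -(prefix_sum_window lam ab) natrD addrK.
Qed.

Lemma Msum_mlam n l lam i j :
  in_triangle n i j -> Msum (entry (mlam n l lam)) i j = (lam i)%:R.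
Proof.
move=> ij; rewrite (Msum_partial_sums (P := fun t => (prefix_sum lam t)%:R) _ _ ij).
- case/and3P: ij => i_gt0 _ _.
  by rewrite -(prednK i_gt0) prefix_sumS natrD addrAC subrr add0r.
- exact: entry_mlam.
- by move=> a b ba; rewrite entry_out ?in_triangle_gt.
Qed.

Section LoweringOperators.

Variables (n l : nat) (eps : algC) (lam : nat -> nat).
Hypotheses (l_gt2 : (2 < l)%N) (l_odd : odd l) (eps_prim : l.-primitive_root eps).
Implicit Types (v : Vsp n l) (m : Blab n l).

Lemma qint_Mij_eq0 m i j :
  (qint eps (Mij n (mval m) i j - (lam i)%:Z) == 0) = (Msum (entry m) i j == (lam i)%:R).
Proof.
rewrite (qint_eq0 l_gt2 l_odd eps_prim) intrB subr_eq0 pmulrn.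
by rewrite -[Mij _ _ _ _]/(Msum _ _ _) (raddf_Msum (intmul 1)).
Qed.

Definition Mrow_eq m r := forall k, (r <= k <= n)%N -> Msum (entry m) r k = (lam r)%:R.

Lemma mshift_unitv_neq m1 m2 i j1 j2 :
  Mrow_eq m1 i.+1 -> Mrow_eq m2 i.+1 -> (0 < i <= j1)%N -> (j1 < j2 <= n)%N ->
  mshift m1 (unitv i j1) != mshift m2 (unitv i j2).
Proof.
move=> M1 M2 /andP[i_gt0 ij1] /andP[j12 j2n]; apply/eqP => e.
(* Both labels satisfy M_{i+1,j2} = lambda_{i+1}, but their difference
   eps_{i,j1} - eps_{i,j2} contributes -1 to M_{i+1,j2}. *)
pose D a b : 'Z_l := (unitv i j1 a b - unitv i j2 a b)%:~R.
have eD : (fun a b => entry m2 a b - entry m1 a b) =2 D.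
  move=> a b; have [ab | ab] := boolP (in_triangle n a b).
    have := congr1 (fun m => entry m a b) e; rewrite /= !entry_mshift // => h.
    apply/eqP; rewrite /D intrB subr_eq addrAC (addrC (unitv i j1 a b)%:~R) h addrK //.
  have unitv_out j : in_triangle n i j -> unitv i j a b = 0.
    move=> ij; rewrite /unitv; case: eqP => [ai | _] //.
    by case: eqP => [bj | _] //; rewrite ai bj ij in ab.
  rewrite !entry_out // /D !unitv_out ?subrr // /in_triangle; lia.
have := MsumB (entry m2) (entry m1) i.+1 j2.
have ij2 : (i.+1 <= j2 <= n)%N by rewrite (leq_ltn_trans ij1 j12) j2n.
rewrite M2 // M1 // subrr.
rewrite (eq_Msum eD) Msum_row_below => [|b|b]; last 2 first.
- by rewrite /D /unitv (gtn_eqF (ltnSn i)) subrr.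
- by rewrite /D /unitv (gtn_eqF (leqnSn i.+1)) subrr.
rewrite /D -(raddf_sum (intmul 1)) (eq_bigr (fun k => (k == j1)%:R - (k == j2)%:R)).
  2: by move=> k _; rewrite /unitv eqxx.
rewrite sumrB !sum_nat_indicator ij1 j12 ltnn andbF subr0 => /eqP.
by rewrite /= mulr1z oppr_eq0 oner_eq0.
Qed.

Lemma Fop_kernel_row_step v i : (0 < i <= n)%N -> Fop eps lam i v = 0 ->
  (forall m, v m != 0 -> Mrow_eq m i.+1) -> forall m, v m != 0 -> Mrow_eq m i.
Proof.
move=> /andP[i_gt0 i_le_n] Fv0 M m vm k ik.
have no_coll m1 m2 j1 j2 : v m1 != 0 -> v m2 != 0 ->
    j1 \in index_iota i n.+1 -> j2 \in index_iota i n.+1 -> (j1 < j2)%N ->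
    mshift m1 (unitv i j1) != mshift m2 (unitv i j2).
  rewrite !mem_index_iota => v1 v2 /andP[ij1 _] /andP[_ j2n] j12.
  by apply: mshift_unitv_neq; [apply: M | apply: M | apply/andP | apply/andP].
have coef0 := sum_mshift_coef_eq0 (iota_uniq _ _) no_coll Fv0.
by apply/eqP; rewrite -qint_Mij_eq0; apply/eqP/coef0; rewrite ?mem_index_iota.
Qed.

Lemma Fop_kernel_Mrow v : (forall i, (0 < i <= n)%N -> Fop eps lam i v = 0) ->
  forall m, v m != 0 -> forall r, (0 < r)%N -> Mrow_eq m r.
Proof.
move=> Fv0.
suff Mrow t r : (n < r + t)%N -> (0 < r)%N -> forall m, v m != 0 -> Mrow_eq m r.
  by move=> m vm r r_gt0; apply: (Mrow n) => //; rewrite -{1}[n]add0n ltn_add2r.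
elim: t r => [|t IHt] r nrt r_gt0 m vm.
  by move=> k /andP[rk kn]; move: (leq_trans rk kn); rewrite leqNgt -[r]addn0 nrt.
have [nrt' | rtn] := ltnP n (r + t); first exact: IHt.
have r_le_n : (0 < r <= n)%N by rewrite r_gt0 (leq_trans (leq_addr t r) rtn).
apply: (Fop_kernel_row_step r_le_n (Fv0 r r_le_n)) vm => m' vm'.
by apply: IHt; rewrite // addSn -addnS.
Qed.

Lemma Fop_kernel_support v : (forall i, (0 < i <= n)%N -> Fop eps lam i v = 0) ->
  forall m, v m != 0 -> m = mlam n l lam.
Proof.
move=> Fv0 m vm.
have diff0 := Msum_eq0_triangle (n := n)
  (c := fun a b => entry m a b - entry (mlam n l lam) a b).
apply: entry_inj => a b _; apply/eqP; rewrite -subr_eq0; apply/eqP/diff0.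
  by move=> {}a {}b ab; rewrite !entry_out ?subrr.
move=> i j ij; have /and3P[i_gt0 ij' jn] := ij.
by rewrite MsumB (Fop_kernel_Mrow Fv0 vm i_gt0) ?Msum_mlam ?subrr ?ij' ?jn.
Qed.

End LoweringOperators.

Theorem proposition5p8 (n l : nat) (eps : algC) (lam : nat -> nat) (v : Vsp n l) :
  (1 <= n)%N -> (2 < l)%N -> odd l -> coprime l n.+1 ->
  l.-primitive_root eps ->
  (forall i, (1 <= i <= n)%N -> (lam i < l)%N) ->
  ((forall i, (1 <= i <= n)%N -> Eop eps i v = 0) <->
     (exists c : algC, v = c *: bvec (0 : Blab n l)))
  /\
  ((forall i, (1 <= i <= n)%N -> Fop eps lam i v = 0) <->
     (exists c : algC, v = c *: bvec (mlam n l lam))).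
Proof.
move=> _ l_gt2 l_odd _ eps_prim _; split; split.
- by move=> Ev0; apply/scale_bvecP; apply: Eop_kernel_support Ev0.
- case=> c -> i _; rewrite /Eop sum_scale_bvec big1_seq ?scaler0 // => j _.
  by apply/eqP; rewrite scaler_eq0 qint_Nij_eq0 // !entry0 eqxx.
- by move=> Fv0; apply/scale_bvecP; apply: Fop_kernel_support Fv0.
- case=> c -> i /andP[i_gt0 _]; rewrite /Fop sum_scale_bvec big1_seq ?scaler0 // => j.
  rewrite mem_index_iota => ijn; apply/eqP.
  by rewrite scaler_eq0 qint_Mij_eq0 // Msum_mlam ?eqxx // /in_triangle i_gt0.
Qed.
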